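(* Fix $t\in\{1,\dots,M\}$, corresponding to the pair $(i,j)$ with $C_t=C_{i,j}$, and let $z^*=(x^*,y^* )\in F(\mathcal{T}_t)$ with $|K_t(z^* )|=2$. Set $$r_t=\min\{g(x_i^*,x_j^*,w_i,w_j),\ g(y_i^*,y_j^*,h_i,h_j)\},\qquad g(a,b,c,d)=\frac{|(a-b)+(c-d)/2|}{\sqrt{2}}.$$ Then every $z\in B(z^*,r_t)$ satisfies $K_t(z)\subseteq K_t(z^* )$.
   Context: Fix reals $W,H>0$, integers $N\ge N_m\ge 2$, and widths $w_i>0$, heights $h_i>0$ for $1\le i\le N_m$. Points of $\mathbb{R}^{2N}$ are written $z=(x,y)$ with $x=(x_1,\dots,x_N)$, $y=(y_1,\dots,y_N)$. For $1\le i\le N_m$ let $B_i^x=\{z: 0\le x_i\le W-w_i\}$, $B_i^y=\{z: 0\le y_i\le H-h_i\}$; for $i\neq j$ let $B_{i,j}=B_i^x\cap B_i^y\cap B_j^x\cap B_j^y$, $O^x_{i,j}=\{z: x_i+w_i\le x_j\}$, $O^y_{i,j}=\{z: y_i+h_i\le y_j\}$. Define the closed convex sets $C_{i,j,\mathsf{L}}=O^x_{i,j}\cap B_{i,j}$, $C_{i,j,\mathsf{R}}=O^x_{j,i}\cap B_{i,j}$, $C_{i,j,\mathsf{B}}=O^y_{i,j}\cap B_{i,j}$, $C_{i,j,\mathsf{A}}=O^y_{j,i}\cap B_{i,j}$ (assumed nonempty) and $C_{i,j}=C_{i,j,\mathsf{L}}\cup C_{i,j,\mathsf{R}}\cup C_{i,j,\mathsf{B}}\cup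 C_{i,j,\mathsf{A}}$. Enumerate the pairs $1\le i<j\le N_m$ by $t=1,\dots,M$ and write $C_t=C_{i,j}$, $C_{t,k}=C_{i,j,k}$. With the Euclidean norm and $\mathrm{d}(z,C)=\inf_{c\in C}\|z-c\|$: $\mathcal{P}_t(z)=\{c\in C_t:\|z-c\|=\mathrm{d}(z,C_t)\}$, $P_{t,k}(z)$ is the unique nearest point of $C_{t,k}$ to $z$; for a fixed $\lambda\in(0,2)$, $\mathcal{T}_t(z)=\{z+\lambda(p-z):p\in\mathcal{P}_t(z)\}$, $F(\mathcal{T}_t)=\{z: z\in\mathcal{T}_t(z)\}$. Active indices: $K_t(z)=\{k\in\{\mathsf{L},\mathsf{R},\mathsf{B},\mathsf{A}\}: P_{t,k}(z)\in\mathcal{P}_t(z)\}$. $B(z,r)$ is the open Euclidean ball (empty if $r=0$). *)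

From HB Require Import structures.
From mathcomp Require Import all_boot all_order all_algebra.
From mathcomp Require Import all_classical all_reals.
Set Implicit Arguments. Unset Strict Implicit. Unset Printing Implicit Defensive.
Import Order.TTheory GRing.Theory Num.Theory.
Local Open Scope ring_scope.
Local Open Scope classical_set_scope.

(* A point z = (x, y) of R^{2N}, indices 0..N-1 (0-based). *)
Definition pt (R : realType) (N : nat) := (('I_N -> R) * ('I_N -> R))%type.

Definition eucl (R : realType) N (z c : pt R N) : R :=
  Num.sqrt (\sum_(k < N) (z.1 k - c.1 k) ^+ 2 + \sum_(k < N) (z.2 k - c.2 k) ^+ 2).

Definition Bx (R : realType) N (W : R) (w : 'I_N -> R) (i : 'I_N) : set (pt R N) :=
  [set z | 0 <= z.1 i /\ z.1 i <= W - w i].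
Definition By (R : realType) N (H : R) (h : 'I_N -> R) (i : 'I_N) : set (pt R N) :=
  [set z | 0 <= z.2 i /\ z.2 i <= H - h i].
Definition Bij (R : realType) N (W H : R) (w h : 'I_N -> R) (i j : 'I_N) :=
  Bx W w i `&` By H h i `&` Bx W w j `&` By H h j.
Definition Ox (R : realType) N (w : 'I_N -> R) (i j : 'I_N) : set (pt R N) :=
  [set z | z.1 i + w i <= z.1 j].
Definition Oy (R : realType) N (h : 'I_N -> R) (i j : 'I_N) : set (pt R N) :=
  [set z | z.2 i + h i <= z.2 j].

Inductive side := sL | sR | sB | sA.

Definition Cside (R : realType) N (W H : R) (w h : 'I_N -> R) (i j : 'I_N)
    (k : side) : set (pt R N) :=
  match k with
  | sL => Ox w i j `&` Bij W H w h i j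
  | sR => Ox w j i `&` Bij W H w h i j
  | sB => Oy h i j `&` Bij W H w h i j
  | sA => Oy h j i `&` Bij W H w h i j
  end.

Definition Cpair (R : realType) N (W H : R) (w h : 'I_N -> R) (i j : 'I_N)
  : set (pt R N) := [set z | exists k, Cside W H w h i j k z].

Definition distset (R : realType) N (z : pt R N) (C : set (pt R N)) : R :=
  inf [set eucl z c | c in C].

Definition nearest_set (R : realType) N (C : set (pt R N)) (z : pt R N)
  : set (pt R N) := [set c | C c /\ eucl z c = distset z C].

Definition is_proj (R : realType) N (C : set (pt R N)) (z p : pt R N) : Prop :=
  C p /\ forall c, C c -> eucl z p <= eucl z c.

Definition relax (R : realType) N (lam : R) (C : set (pt R N)) (z : pt R N)
  : set (pt R N) :=
  [set z' | exists p, nearest_set C z p /\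
     z' = ((fun k => z.1 k + lam * (p.1 k - z.1 k)),
           (fun k => z.2 k + lam * (p.2 k - z.2 k)))].

Definition fixpts (R : realType) N (lam : R) (C : set (pt R N)) : set (pt R N) :=
  [set z | relax lam C z z].

Definition active (R : realType) N (W H : R) (w h : 'I_N -> R) (i j : 'I_N)
    (z : pt R N) : set side :=
  [set k | exists p, is_proj (Cside W H w h i j k) z p /\
                     nearest_set (Cpair W H w h i j) z p].

Definition gfun (R : realType) (a b c d : R) : R :=
  `|(a - b) + (c - d) / 2| / Num.sqrt 2.

From Pilot Require Import Defs.
From HB Require Import structures.
From mathcomp Require Import all_boot all_order all_algebra.
From mathcomp Require Import all_classical all_reals.
From mathcomp Require Import ring lra.
Import Order.TTheory GRing.Theory Num.Theory.
Set Implicit Arguments. Unset Strict Implicit. Unset Printing Implicit Defensive.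
Local Open Scope ring_scope.
Local Open Scope classical_set_scope.

(* Since lam <> 0, the fixed point z* lies in C_t, so the active pieces at z*
   are exactly the pieces containing z*; as L/R and B/A are pairwise disjoint,
   z* lies in one piece of each opposite pair.  If an inactive k were active at
   z, then z* lies in the opposite piece, while the projection p of z onto C_k
   is a nearest point of C_t.  In the coordinates (x_i, x_j) (or (y_i, y_j))
   the radius r_t is the distance from z* to the hyperplane bisecting the two
   opposite constraints, so z is strictly closer to the segment
   {x_j = x_i + w_i} inside the box than to the half-plane containing p;
   moving only these two coordinates of p to that segment gives a point of
   C_t closer to z than p, a contradiction. *)

Section Plane.
Variable R : realFieldType.

Lemma norm_lt_of_sqr (x y : R) : 0 <= y -> x ^+ 2 < y ^+ 2 -> `|x| < y.
Proof.
by move=> y0 lt_sq; rewrite -ltr_sqr ?nnegrE ?normr_ge0 // (real_normK (num_real x)).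
Qed.

Lemma clamp_gap_bound (m a ep D T : R) :
  0 < m -> 0 <= a -> 0 <= ep -> a + ep <= `|T| ->
  D ^+ 2 + T ^+ 2 < (m + a) ^+ 2 -> ep ^+ 2 < 4 * m * (m + a + D).
Proof.
move=> m0 a0 ep0 aepT lt_DT.
have T_lt : `|T| < m + a.
  by apply: norm_lt_of_sqr; have := sqr_ge0 D; lra.
have /ltr_normlP[D_lo D_hi] : `|D| < m + a.
  by apply: norm_lt_of_sqr; have := sqr_ge0 T; lra.
have lt_prod : (a + ep) ^+ 2 < (m + a + D) * (m + a - D).
  have : (a + ep) ^+ 2 <= `|T| ^+ 2 by rewrite ler_sqr ?nnegrE //; lra.
  rewrite (real_normK (num_real T)).
  have -> : (m + a + D) * (m + a - D) = (m + a) ^+ 2 - D ^+ 2 by ring.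
  lra.
have ep_sq_le : (m + a) * ep ^+ 2 <= 2 * m * (a + ep) ^+ 2.
  have : a * ep * ep <= a * ep * m by rewrite ler_wpM2l ?mulr_ge0 //; lra.
  rewrite !expr2; nra.
have : (m + a - D) * ep ^+ 2 < (m + a - D) * (4 * m * (m + a + D)).
  have : (m + a - D) * ep ^+ 2 <= 2 * (m + a) * ep ^+ 2.
    by rewrite ler_wpM2r ?sqr_ge0 //; lra.
  have : 4 * m * (a + ep) ^+ 2 < 4 * m * ((m + a + D) * (m + a - D)).
    by rewrite ltr_pM2l //; lra.
  lra.
by rewrite ltr_pM2l // subr_gt0.
Qed.

(* With u = z1 - z2 and v = z1 + z2, the segment is u = -wi and the half-plane
   is u >= wj; the hypothesis puts z strictly on the segment's side of the
   bisector u = (wj - wi)/2, and since s is at v-distance at least a from both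
   ends of the segment, clamping the foot of the perpendicular costs at most
   what [clamp_gap_bound] allows. *)
Lemma segment_beats_halfplane (W wi wj s1 s2 z1 z2 p1 p2 : R) :
  0 < wi -> 0 < wj -> 0 <= s1 -> s2 <= W - wj -> s1 + wi <= s2 ->
  p2 + wj <= p1 ->
  2 * ((z1 - s1) ^+ 2 + (z2 - s2) ^+ 2) < (s1 - s2 + (wi - wj) / 2) ^+ 2 ->
  exists2 q, 0 <= q <= W - wi - wj &
    (z1 - q) ^+ 2 + (z2 - (q + wi)) ^+ 2 < (z1 - p1) ^+ 2 + (z2 - p2) ^+ 2.
Proof.
move=> wi0 wj0 s10 s2W s12 p12 z_near.
set m := (wi + wj) / 2; set a := s2 - s1 - wi.
set D := s1 - s2 - (z1 - z2); set T := s1 + s2 - (z1 + z2).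
have m0 : 0 < m by rewrite /m; lra.
have a0 : 0 <= a by rewrite /a; lra.
have hDT : D ^+ 2 + T ^+ 2 < (m + a) ^+ 2.
  have -> : D ^+ 2 + T ^+ 2 = 2 * ((z1 - s1) ^+ 2 + (z2 - s2) ^+ 2)
    by rewrite /D /T; ring.
  by have -> : (m + a) ^+ 2 = (s1 - s2 + (wi - wj) / 2) ^+ 2
    by rewrite /m /a; field.
have gap0 : 0 < m + a + D.
  have /ltr_normlP[D_lo _] : `|D| < m + a.
    by apply: norm_lt_of_sqr; have := sqr_ge0 T; lra.
  lra.
have dist_halfplane : (wj - (z1 - z2)) ^+ 2 / 2 <= (z1 - p1) ^+ 2 + (z2 - p2) ^+ 2.
  have : 0 <= (z1 - p1 + (z2 - p2)) ^+ 2 := sqr_ge0 _.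
  have : (wj - (z1 - z2)) ^+ 2 <= (p1 - p2 - (z1 - z2)) ^+ 2.
    by rewrite !expr2; rewrite /m /a /D in gap0; nra.
  have -> : (z1 - p1) ^+ 2 + (z2 - p2) ^+ 2 =
    ((p1 - p2 - (z1 - z2)) ^+ 2 + (z1 - p1 + (z2 - p2)) ^+ 2) / 2 by field.
  lra.
have dist_segment q : (z1 - q) ^+ 2 + (z2 - (q + wi)) ^+ 2 =
    ((z1 - z2 + wi) ^+ 2 + (z1 + z2 - wi - 2 * q) ^+ 2) / 2 by field.
have dist_gap : (wj - (z1 - z2)) ^+ 2 - (z1 - z2 + wi) ^+ 2 = 4 * m * (m + a + D)
  by rewrite /m /a /D; field.
suff [q q_range q_gap] : exists2 q, 0 <= q <= W - wi - wj &
    (z1 + z2 - wi - 2 * q) ^+ 2 < 4 * m * (m + a + D).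
  by exists q => //; rewrite dist_segment; lra.
have gap ep : 0 <= ep -> a + ep <= `|T| -> ep ^+ 2 < 4 * m * (m + a + D).
  by move=> ep0 aep; exact: (clamp_gap_bound m0 a0 ep0 aep hDT).
have [lo | lo] := lerP (z1 + z2 - wi) 0.
  exists 0; first by apply/andP; lra.
  rewrite mulr0 subr0 -sqrrN opprB; apply: gap; first lra.
  by apply: le_trans (ler_norm T); rewrite /a /T; lra.
have [hi | hi] := lerP (2 * (W - wi - wj)) (z1 + z2 - wi).
  exists (W - wi - wj); first by apply/andP; lra.
  apply: gap; first lra.
  by rewrite -normrN; apply: le_trans (ler_norm _); rewrite /a /T; lra.
exists ((z1 + z2 - wi) / 2); first by apply/andP; lra.
have -> : z1 + z2 - wi - 2 * ((z1 + z2 - wi) / 2) = 0 by field.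
by rewrite expr0n /= mulr_gt0 // mulr_gt0.
Qed.

End Plane.

Section Blocks.
Variables (R : realDomainType) (N : nat).
Implicit Types (zf sf pf : 'I_N -> R).

Definition update2 pf (i j : 'I_N) (a b : R) : 'I_N -> R :=
  fun k => if k == i then a else if k == j then b else pf k.

Lemma sum_split_pair (f : 'I_N -> R) (i j : 'I_N) : i != j ->
  \sum_(k < N) f k = f i + f j + \sum_(k < N | (k != i) && (k != j)) f k.
Proof.
move=> ij; rewrite (bigD1 i) //= (bigD1 j) 1?eq_sym //=.
by rewrite addrA.
Qed.

Lemma sumsq_pair_le zf sf (i j : 'I_N) : i != j ->
  (zf i - sf i) ^+ 2 + (zf j - sf j) ^+ 2 <= \sum_(k < N) (zf k - sf k) ^+ 2.
Proof.
move=> ij; rewrite (sum_split_pair _ ij) lerDl.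
by apply: sumr_ge0 => k _; apply: sqr_ge0.
Qed.

Lemma sumsq_update2_lt zf pf (i j : 'I_N) (a b : R) : i != j ->
  (zf i - a) ^+ 2 + (zf j - b) ^+ 2 < (zf i - pf i) ^+ 2 + (zf j - pf j) ^+ 2 ->
  \sum_(k < N) (zf k - update2 pf i j a b k) ^+ 2 < \sum_(k < N) (zf k - pf k) ^+ 2.
Proof.
move=> ij lt_pair.
rewrite !(sum_split_pair _ ij) /update2 eqxx eq_sym (negbTE ij) eqxx.
under eq_bigr => k /andP[/negbTE -> /negbTE ->] do [].
by rewrite ltrD2r.
Qed.

End Blocks.

Lemma sqrt_lt_gfun (R : realType) (X a b c d : R) : 0 <= X ->
  Num.sqrt X < gfun a b c d -> 2 * X < (a - b + (c - d) / 2) ^+ 2.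
Proof.
rewrite /gfun => X0 lt_g.
have := ltr_pM (sqrtr_ge0 X) (sqrtr_ge0 X) lt_g lt_g.
rewrite -!expr2 sqr_sqrtr // expr_div_n sqr_sqrtr // real_normK ?num_real //.
move=> lt_sq; have : X * 2 < (a - b + (c - d) / 2) ^+ 2 by rewrite -ltr_pdivlMr.
by rewrite mulrC.
Qed.

Lemma closer_L_coords (R : realType) (N : nat) (W : R) (w : 'I_N -> R)
    (i j : 'I_N) (zf sf pf : 'I_N -> R) (S : R) :
  i != j -> 0 < w i -> 0 < w j -> 0 <= S ->
  0 <= sf i -> sf j <= W - w j -> sf i + w i <= sf j -> pf j + w j <= pf i ->
  Num.sqrt (\sum_(k < N) (zf k - sf k) ^+ 2 + S) < gfun (sf i) (sf j) (w i) (w j) ->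
  exists cf : 'I_N -> R, [/\ cf i + w i <= cf j, 0 <= cf i <= W - w i,
    0 <= cf j <= W - w j &
    \sum_(k < N) (zf k - cf k) ^+ 2 < \sum_(k < N) (zf k - pf k) ^+ 2].
Proof.
move=> ij wi0 wj0 S0 si0 sjW sij pji lt_g.
have pair_le := sumsq_pair_le zf sf ij.
have sum0 : 0 <= \sum_(k < N) (zf k - sf k) ^+ 2.
  by apply: sumr_ge0 => k _; apply: sqr_ge0.
have := sqrt_lt_gfun (addr_ge0 sum0 S0) lt_g => lt_sq.
have [q /andP[q0 qW] closer] : exists2 q, 0 <= q <= W - w i - w j &
    (zf i - q) ^+ 2 + (zf j - (q + w i)) ^+ 2 <
    (zf i - pf i) ^+ 2 + (zf j - pf j) ^+ 2.
  by apply: (segment_beats_halfplane wi0 wj0 si0 sjW sij pji); lra.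
exists (update2 pf i j q (q + w i)).
rewrite /update2 eqxx eq_sym (negbTE ij) eqxx; split; try apply/andP; try lra.
exact: sumsq_update2_lt.
Qed.

Section Distance.
Variables (R : realType) (N : nat).
Implicit Types (z c p : pt R N) (C : set (pt R N)).

Lemma eucl_self z : eucl z z = 0.
Proof. by rewrite /eucl !big1 ?addr0 ?sqrtr0 // => k _; rewrite subrr expr0n. Qed.

Lemma eucl_eq0 z p : eucl z p = 0 -> p = z.
Proof.
rewrite /eucl => /eqP; rewrite sqrtr_eq0 => le0.
have sq0 (f g : 'I_N -> R) : 0 <= \sum_(k < N) (f k - g k) ^+ 2.
  by apply: sumr_ge0 => k _; apply: sqr_ge0.
have coord_eq (f g : 'I_N -> R) : \sum_(k < N) (f k - g k) ^+ 2 = 0 -> g = f.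
  move=> /(psumr_eq0P (fun k _ => sqr_ge0 (f k - g k))) eq0.
  apply: boolp.funext => k; apply/esym/eqP.
  by rewrite -subr_eq0 -sqrf_eq0 eq0.
have := sq0 z.1 p.1; have := sq0 z.2 p.2 => ge2 ge1.
case: z p le0 ge1 ge2 => [z1 z2] [p1 p2] /= le0 ge1 ge2.
have sum1 : \sum_(k < N) (z1 k - p1 k) ^+ 2 = 0 by lra.
have sum2 : \sum_(k < N) (z2 k - p2 k) ^+ 2 = 0 by lra.
by rewrite (coord_eq _ _ sum1) (coord_eq _ _ sum2).
Qed.

Lemma eucl_lt_sumsq z c p :
  \sum_(k < N) (z.1 k - c.1 k) ^+ 2 + \sum_(k < N) (z.2 k - c.2 k) ^+ 2 <
  \sum_(k < N) (z.1 k - p.1 k) ^+ 2 + \sum_(k < N) (z.2 k - p.2 k) ^+ 2 ->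
  eucl z c < eucl z p.
Proof.
move=> lt_sum; rewrite /eucl ltr_sqrt //; apply: le_lt_trans lt_sum.
by apply: addr_ge0; apply: sumr_ge0 => k _; apply: sqr_ge0.
Qed.

Lemma distset_le C z c : C c -> distset z C <= eucl z c.
Proof.
move=> Cc; apply: ge_inf; last by exists c.
by exists 0 => _ [c' _ <-]; apply: sqrtr_ge0.
Qed.

Lemma nearest_le C z p c : nearest_set C z p -> C c -> eucl z p <= eucl z c.
Proof. by case=> _ ->; apply: distset_le. Qed.

Lemma nearest_self C z p : C z -> nearest_set C z p -> p = z.
Proof.
move=> Cz [Cp dist_p]; apply: eucl_eq0; apply/eqP; rewrite eq_le dist_p.
rewrite -[X in _ <= X](eucl_self z) distset_le //=.
apply: lb_le_inf; first by exists (eucl z z), z.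
by move=> _ [c _ <-]; apply: sqrtr_ge0.
Qed.

Lemma fixpts_sub (lam : R) C : lam != 0 -> fixpts lam C `<=` C.
Proof.
move=> lam0 z [p [[Cp _] z_eq]].
have fix_coord (x y : R) : x = x + lam * (y - x) -> y = x.
  move=> /(congr1 (fun t => t - x)); rewrite subrr addrC addKr => /esym/eqP.
  by rewrite mulf_eq0 (negbTE lam0) subr_eq0 => /eqP.
suff -> : z = p by [].
case: z p Cp z_eq => [z1 z2] [p1 p2] _ [z1_eq z2_eq]; congr pair.
  by apply: boolp.funext => k; apply/esym/fix_coord/(congr1 (fun f => f k) z1_eq).
by apply: boolp.funext => k; apply/esym/fix_coord/(congr1 (fun f => f k) z2_eq).
Qed.

End Distance.

Definition opp (k : side) : side :=
  match k with sL => sR | sR => sL | sB => sA | sA => sB end.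

Lemma opp_of_two_sides (P : side -> Prop) (k1 k2 k : side) :
  (forall k, P k -> ~ P (opp k)) -> P k1 -> P k2 -> k1 <> k2 ->
  k <> k1 -> k <> k2 -> P (opp k).
Proof.
move=> excl; case: k; case: k1; case: k2 => //= P1 P2 *;
  by [case: (excl _ P1 P2) | case: (excl _ P2 P1)].
Qed.

Lemma gfunC (R : realType) (a b c d : R) : gfun a b c d = gfun b a d c.
Proof.
by rewrite /gfun -normrN; congr (`|_| / _); ring.
Qed.

Section Pieces.
Variables (R : realType) (N : nat) (W H : R) (w h : 'I_N -> R).
Implicit Types (z zs p c : pt R N) (i j : 'I_N).
Local Notation piece := (Cside W H w h).

Lemma Cside_swap i j k : piece j i k = piece i j (opp k).
Proof.
by apply/seteqP; case: k; split=> c; rewrite /= /Defs.Bij /=; tauto.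
Qed.

Lemma Cside_opp_disjoint i j k c : 0 < w i -> 0 < w j -> 0 < h i -> 0 < h j ->
  piece i j k c -> ~ piece i j (opp k) c.
Proof.
by case: k => wi0 wj0 hi0 hj0 [/= o1 _] [/= o2 _];
  rewrite /Ox /Oy /= in o1 o2; lra.
Qed.

Lemma active_sub_Cside i j zs k : Cpair W H w h i j zs ->
  active W H w h i j zs k -> piece i j k zs.
Proof. by move=> Czs [p [[Cp _] /(nearest_self Czs) <-]]. Qed.

Lemma L_piece_beats_R i j zs p z : i != j -> 0 < w i -> 0 < w j ->
  piece i j sL zs -> piece i j sR p ->
  eucl z zs < gfun (zs.1 i) (zs.1 j) (w i) (w j) ->
  exists2 c, piece i j sL c & eucl z c < eucl z p.
Proof.
move=> ij wi0 wj0 [/= zs_L [[[[xi0 _] _] [_ xjW]] _]] [/= p_R [[[_ yi] _] yj]].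
have S0 : 0 <= \sum_(k < N) (z.2 k - zs.2 k) ^+ 2.
  by apply: sumr_ge0 => k _; apply: sqr_ge0.
move=> /(closer_L_coords ij wi0 wj0 S0 xi0 xjW zs_L p_R) [cf [cij ci cj closer]].
exists (cf, p.2); last by apply: eucl_lt_sumsq; rewrite /= ltrD2r.
by move/andP: ci; move/andP: cj.
Qed.

Lemma B_piece_beats_A i j zs p z : i != j -> 0 < h i -> 0 < h j ->
  piece i j sB zs -> piece i j sA p ->
  eucl z zs < gfun (zs.2 i) (zs.2 j) (h i) (h j) ->
  exists2 c, piece i j sB c & eucl z c < eucl z p.
Proof.
move=> ij hi0 hj0 [/= zs_B [[[_ [yi0 _]] _] [_ yjH]]] [/= p_A [[[xi _] xj] _]].
have S0 : 0 <= \sum_(k < N) (z.1 k - zs.1 k) ^+ 2.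
  by apply: sumr_ge0 => k _; apply: sqr_ge0.
rewrite /eucl addrC.
move=> /(closer_L_coords ij hi0 hj0 S0 yi0 yjH zs_B p_A) [cf [cij ci cj closer]].
exists (p.1, cf); last by apply: eucl_lt_sumsq; rewrite /= ltrD2l.
by move/andP: ci; move/andP: cj.
Qed.

Lemma opp_piece_beats i j zs p z k :
  i != j -> 0 < w i -> 0 < w j -> 0 < h i -> 0 < h j ->
  piece i j (opp k) zs -> piece i j k p ->
  eucl z zs < Num.min (gfun (zs.1 i) (zs.1 j) (w i) (w j))
                      (gfun (zs.2 i) (zs.2 j) (h i) (h j)) ->
  exists2 c, Cpair W H w h i j c & eucl z c < eucl z p.
Proof.
move=> ij wi0 wj0 hi0 hj0 zs_opp p_k; rewrite lt_min => /andP[near_x near_y].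
have ji : j != i by rewrite eq_sym.
case: k zs_opp p_k => /= zs_opp p_k.
- rewrite gfunC in near_x.
  have zs_L : piece j i sL zs by rewrite Cside_swap.
  have p_R : piece j i sR p by rewrite Cside_swap.
  have [c c_L closer] := L_piece_beats_R ji wj0 wi0 zs_L p_R near_x.
  by exists c => //; exists sR; rewrite -[sR]/(opp sL) -Cside_swap.
- have [c c_L closer] := L_piece_beats_R ij wi0 wj0 zs_opp p_k near_x.
  by exists c => //; exists sL.
- rewrite gfunC in near_y.
  have zs_B : piece j i sB zs by rewrite Cside_swap.
  have p_A : piece j i sA p by rewrite Cside_swap.
  have [c c_B closer] := B_piece_beats_A ji hj0 hi0 zs_B p_A near_y.
  by exists c => //; exists sA; rewrite -[sA]/(opp sB) -Cside_swap.
- have [c c_B closer] := B_piece_beats_A ij hi0 hj0 zs_opp p_k near_y.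
  by exists c => //; exists sB.
Qed.

End Pieces.

Theorem mainTheorem6 (R : realType) (W H : R) (N Nm : nat)
    (w h : 'I_N -> R) (lam : R) (i j : 'I_N) :
  0 < W -> 0 < H -> (2 <= Nm)%N -> (Nm <= N)%N ->
  (forall k : 'I_N, (k < Nm)%N -> 0 < w k /\ 0 < h k) ->
  (i < j)%N -> (j < Nm)%N ->
  (forall k : side, Cside W H w h i j k !=set0) ->
  0 < lam < 2 ->
  forall zs : pt R N,
    fixpts lam (Cpair W H w h i j) zs ->
    (exists k1 k2 : side, k1 <> k2 /\
       forall k, active W H w h i j zs k <-> (k = k1 \/ k = k2)) ->
    let r := Num.min (gfun (zs.1 i) (zs.1 j) (w i) (w j))
                     (gfun (zs.2 i) (zs.2 j) (h i) (h j)) in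
    forall z : pt R N, eucl z zs < r ->
      active W H w h i j z `<=` active W H w h i j zs.
Proof.
move=> _ _ _ _ pos ij jNm _ lam02 zs fix_zs [k1 [k2 [k12 act_zs]]] r z z_near k.
move=> [p [[p_k _] p_nearest]].
have nij : i != j by rewrite neq_ltn ij.
have [wi0 hi0] := pos i (ltn_trans ij jNm).
have [wj0 hj0] := pos j jNm.
have lam0 : lam != 0 by rewrite gt_eqF //; case/andP: lam02.
have C_zs := fixpts_sub lam0 fix_zs.
apply: boolp.contrapT => not_act.
have zs_opp : Cside W H w h i j (opp k) zs.
  apply: (@opp_of_two_sides (Cside W H w h i j ^~ zs) k1 k2) => //.
  - by move=> k'; apply: Cside_opp_disjoint.
  - by apply: (active_sub_Cside C_zs); apply/act_zs; left.
  - by apply: (active_sub_Cside C_zs); apply/act_zs; right.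
  - by move=> e; apply: not_act; apply/act_zs; left.
  - by move=> e; apply: not_act; apply/act_zs; right.
have [c C_c closer] := opp_piece_beats nij wi0 wj0 hi0 hj0 zs_opp p_k z_near.
by have := nearest_le p_nearest C_c; rewrite leNgt closer.
Qed.
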